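(* Let $n\geq 3$, $m\geq 2$ and $k\geq 1$. The group $B_n/[B_n[m], B_n[m]](mk+1)$ is finite and isomorphic to the cyclic group $\mathbb{Z}_{mk+1}$.
   Context: $B_n$ is the braid group on $n$ strands with standard generators $\sigma_1,\dots,\sigma_{n-1}$. For $m\ge 2$, the level $m$ congruence subgroup $B_n[m]$ is the kernel of the mod $m$ reduction $\rho_m$ of the symplectic representation of $B_n$ obtained by specializing the (reducible) Burau representation at $t=-1$. $[B_n[m],B_n[m]]$ denotes its commutator subgroup. For positive integers $n,m,p$, $B_n/[B_n[m], B_n[m]](p)$ denotes the Coxeter-type quotient of $B_n/[B_n[m], B_n[m]]$ obtained by adding the relations $\sigma_i^p=1$ for all $1\le i\le n-1$, i.e. the quotient of $B_n$ by the normal subgroup generated by $[B_n[m],B_n[m]]$ and $\sigma_1^p$. *)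

(* The braid group B_n is presented by words in the
   generators sigma_i^{+-1}; groups defined by presentations are encoded as
   words modulo the least congruence generated by the defining relations. *)
From mathcomp Require Import all_boot all_order all_algebra.
Set Implicit Arguments. Unset Strict Implicit. Unset Printing Implicit Defensive.
Import GRing.Theory.
Local Open Scope ring_scope.

(* A letter (i, true) is sigma_{i+1}, (i, false) is sigma_{i+1}^{-1},
   for i : 'I_(n.-1) (so index 0 is sigma_1). *)
Definition letter (n : nat) := ('I_(n.-1) * bool)%type.
Definition word (n : nat) := seq (letter n).

Definition winv n (w : word n) : word n := rev (map (fun x => (x.1, ~~ x.2)) w).

Inductive braid_rel (n : nat) : word n -> word n -> Prop :=
| br_free (i : 'I_(n.-1)) (b : bool) : braid_rel [:: (i, b); (i, ~~ b)] [::]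
| br_far (i j : 'I_(n.-1)) : (i.+1 < j)%N ->
    braid_rel [:: (i, true); (j, true)] [:: (j, true); (i, true)]
| br_near (i j : 'I_(n.-1)) : val j = (val i).+1 ->
    braid_rel [:: (i, true); (j, true); (i, true)] [:: (j, true); (i, true); (j, true)].

Inductive cong_closure (A : Type) (R : seq A -> seq A -> Prop) : seq A -> seq A -> Prop :=
| cc_base u v : R u v -> cong_closure R u v
| cc_refl u : cong_closure R u u
| cc_sym u v : cong_closure R u v -> cong_closure R v u
| cc_trans u v w : cong_closure R u v -> cong_closure R v w -> cong_closure R u w
| cc_cat u u' v v' : cong_closure R u u' -> cong_closure R v v' ->
    cong_closure R (u ++ v) (u' ++ v').

Definition braid_eq n : word n -> word n -> Prop := cong_closure (@braid_rel n).

(* Burau representation (unreduced, n x n) specialized at t = -1, mod m.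
   sigma_i acts by the block [[1-t, t],[1, 0]] = [[2,-1],[1,0]] in rows/cols
   i, i+1; its inverse is [[0,1],[-1,2]]. *)
Definition burau_gen (n m : nat) (x : letter n) : 'M['Z_m]_n :=
  let i := val x.1 in
  \matrix_(a < n, b < n)
    if val a == i then
      (if val b == i then (if x.2 then 2 else 0)
       else if val b == i.+1 then (if x.2 then -1 else 1) else 0)
    else if val a == i.+1 then
      (if val b == i then (if x.2 then 1 else -1)
       else if val b == i.+1 then (if x.2 then 0 else 2) else 0)
    else (val a == val b)%:R.

Definition rho (n m : nat) (w : word n) : 'M['Z_m]_n :=
  foldr (fun x M => burau_gen m x *m M) 1%:M w.

(* Membership (of a representative word) in B_n[m] = ker rho_m. *)
Definition in_congr (n m : nat) (w : word n) : Prop := rho m w = 1%:M.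

Definition commw n (u v : word n) : word n := u ++ v ++ winv u ++ winv v.

(* Relations of B_n / [B_n[m],B_n[m]] (p): braid relations, all commutators
   of elements of B_n[m], and sigma_1^p (taking the normal closure is
   automatic since we take the congruence closure). *)
Inductive quot_rel (n m p : nat) : word n -> word n -> Prop :=
| qr_braid u v : braid_rel u v -> quot_rel m p u v
| qr_comm u v : in_congr m u -> in_congr m v -> quot_rel m p (commw u v) [::]
| qr_pow (i : 'I_(n.-1)) : val i = 0%N -> quot_rel m p (nseq p (i, true)) [::].

Definition quot_eq n m p : word n -> word n -> Prop := cong_closure (@quot_rel n m p).

From mathcomp Require Import all_boot all_order all_algebra.
From mathcomp Require Import ring zify.
From Stdlib Require Import Setoid Morphisms.
Set Implicit Arguments. Unset Strict Implicit. Unset Printing Implicit Defensive.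
Import GRing.Theory.

(* The Burau matrix of sigma_i at t = -1 is a transvection 1 + N with N^2 = 0,
   so sigma_i^m lies in B_n[m] and the m-th powers of any two generators
   commute in the quotient.  Put p = mk + 1.  If a = sigma_i and b = sigma_(i+1)
   satisfy aba = bab and a^p = 1, then b is conjugate to a, so b^p = 1 as well;
   hence a = (a^m)^-k and b = (b^m)^-k commute, and the braid relation collapses
   to a = b.  All generators therefore equal sigma_1, which has order dividing p;
   the exponent sum mod p is a well-defined surjection onto Z_p, so the quotient
   is cyclic of order exactly p. *)

Lemma Zp_natr_self (q : nat) : (1 < q)%N -> (q%:R : 'Z_q)%R = 0%R.
Proof. by move=> q_gt1; apply: val_inj; rewrite /= val_Zp_nat // modnn. Qed.

Section BurauTransvection.
Local Open Scope ring_scope.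
Variables (n m : nat).

Lemma rank_one_mx_sqr (R : pzRingType) (u : 'cV[R]_n) (v : 'rV[R]_n) :
  v *m u = 0 -> (u *m v) *m (u *m v) = 0.
Proof. by move=> vu0; rewrite -mulmxA [v *m _]mulmxA vu0 mul0mx mulmx0. Qed.

Lemma rho_nseq_unipotent (x : letter n) (N : 'M['Z_m]_n) :
  burau_gen m x = 1%:M + N -> N *m N = 0 ->
  forall j, rho m (nseq j x) = 1%:M + j%:R *: N.
Proof.
move=> hx hN; elim=> [|j IH]; first by rewrite /rho /= scale0r addr0.
have -> : rho m (nseq j.+1 x) = burau_gen m x *m rho m (nseq j x) by [].
rewrite IH hx mulmxDl mul1mx mulmxDr mulmx1 -scalemxAr hN scaler0 addr0.
by rewrite mulrS scalerDl scale1r -addrA (addrC N).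
Qed.

Lemma burau_gen_sigma (i : 'I_n.-1) (a b : 'I_n) :
  val a = val i -> val b = (val i).+1 ->
  burau_gen m (i, true) =
    1%:M + (delta_mx a 0 + delta_mx b 0) *m (delta_mx 0 a - delta_mx 0 b :> 'rV_n).
Proof.
move=> ha hb; apply/matrixP => r c.
rewrite !mxE big_ord1 !mxE /= -!val_eqE /= ha hb.
case: (val r =P val i) => h1; case: (val r =P (val i).+1) => h2;
case: (val c =P val i) => h3; case: (val c =P (val i).+1) => h4;
case: (val r =P val c) => h5; rewrite /= ?eqxx; try (exfalso; lia); ring.
Qed.

Lemma in_congr_sigma_exp (i : 'I_n.-1) : (1 < m)%N -> in_congr m (nseq m (i, true)).
Proof.
move=> m_gt1; have i_lt : (val i < n.-1)%N := ltn_ord i.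
have a_lt : (val i < n)%N by lia.
have b_lt : ((val i).+1 < n)%N by lia.
pose a := Ordinal a_lt; pose b := Ordinal b_lt.
have ab_neq : a != b by rewrite -val_eqE /= neq_ltn ltnSn.
rewrite /in_congr (rho_nseq_unipotent (burau_gen_sigma (a := a) (b := b) _ _)) //.
  by rewrite Zp_natr_self // scale0r addr0.
apply: rank_one_mx_sqr; have ba_neq : b != a by rewrite eq_sym.
rewrite mulmxBl !mulmxDr !mul_delta_mx !mul_delta_mx_0 //.
by rewrite addr0 add0r subrr.
Qed.

End BurauTransvection.

Definition wpow n (w : word n) (j : nat) : word n := flatten (nseq j w).

Lemma wpowS n (w : word n) j : wpow w j.+1 = w ++ wpow w j.
Proof. by []. Qed.

Lemma wpowD n (w : word n) i j : wpow w (i + j) = wpow w i ++ wpow w j.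
Proof. by elim: i => //= i IH; rewrite !wpowS IH catA. Qed.

Lemma wpowM n (w : word n) i j : wpow w (i * j) = wpow (wpow w i) j.
Proof. by elim: j => [|j IH]; rewrite ?muln0 // mulnS wpowD IH. Qed.

Lemma wpow_letter n (x : letter n) j : wpow [:: x] j = nseq j x.
Proof. by elim: j => // j IH; rewrite wpowS IH. Qed.

Lemma wpow_nil n j : wpow ([::] : word n) j = [::].
Proof. by elim: j. Qed.

Lemma winvK n (w : word n) : winv (winv w) = w.
Proof.
rewrite /winv map_rev revK -map_comp -[RHS]map_id.
by apply: eq_map => -[i b] /=; rewrite negbK.
Qed.

#[export] Instance quot_eq_Equivalence n m p : Equivalence (@quot_eq n m p).
Proof. split; [exact: cc_refl | exact: cc_sym | exact: cc_trans]. Qed.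

#[export] Instance cat_quot_eq_Proper n m p :
  Proper (@quot_eq n m p ==> @quot_eq n m p ==> @quot_eq n m p) (@cat (letter n)).
Proof. by move=> u u' hu v v' hv; apply: cc_cat. Qed.

#[export] Instance wpow_quot_eq_Proper n m p :
  Proper (@quot_eq n m p ==> eq ==> @quot_eq n m p) (@wpow n).
Proof.
move=> u v huv j _ <-; elim: j => [|j IH]; first reflexivity.
by rewrite !wpowS; apply: cc_cat.
Qed.

#[local] Hint Extern 0 (quot_eq _ _ _ _) => reflexivity : core.

Section QuotientGroup.
Variables n m p : nat.
Local Notation "u ≡ v" := (@quot_eq n m p u v) (at level 70).
Implicit Types u v w x a b : word n.

Lemma quot_eq_rel u v : quot_rel m p u v -> u ≡ v.
Proof. exact: cc_base. Qed.

Lemma quot_catV u : u ++ winv u ≡ [::].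
Proof.
elim: u => [|[i c] u IH] /=; first reflexivity.
rewrite /winv /= rev_cons -cats1 -/(winv u).
have -> : (i, c) :: u ++ winv u ++ [:: (i, ~~ c)] =
          [:: (i, c)] ++ (u ++ winv u) ++ [:: (i, ~~ c)] by rewrite /= catA.
by rewrite IH; apply/quot_eq_rel/qr_braid/br_free.
Qed.

Lemma quot_Vcat u : winv u ++ u ≡ [::].
Proof. by have := quot_catV (winv u); rewrite winvK. Qed.

Lemma quot_cancel_l u v w : u ++ v ≡ u ++ w -> v ≡ w.
Proof. by move=> h; rewrite -[v]cat0s -[w]cat0s -(quot_Vcat u) -!catA h. Qed.

Lemma quot_cancel_r u v w : v ++ u ≡ w ++ u -> v ≡ w.
Proof. by move=> h; rewrite -[v]cats0 -[w]cats0 -(quot_catV u) !catA h. Qed.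

Lemma winv_eq_wpow x q : wpow x q.+1 ≡ [::] -> winv x ≡ wpow x q.
Proof. by move=> hx; apply: (@quot_cancel_l x); rewrite quot_catV -wpowS hx. Qed.

Lemma eq_winv_wpow x q : wpow x q.+1 ≡ [::] -> x ≡ winv (wpow x q).
Proof. by move=> hx; apply: (@quot_cancel_r (wpow x q)); rewrite quot_Vcat -wpowS hx. Qed.

Definition wcommute u v := u ++ v ≡ v ++ u.

Lemma wcommute_sym u v : wcommute u v -> wcommute v u.
Proof. by rewrite /wcommute => ->. Qed.

Lemma wcommute_commw u v : commw u v ≡ [::] -> wcommute u v.
Proof.
move=> huv; rewrite /wcommute -[v ++ u]cat0s -huv /commw -!catA.
by rewrite (catA (winv v)) quot_Vcat /= quot_Vcat cats0.
Qed.

Lemma wcommute_wpow u v j : wcommute u v -> wcommute (wpow u j) v.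
Proof.
rewrite /wcommute => huv; elim: j => [|j IH] /=; first by rewrite cats0.
by rewrite wpowS -catA IH catA huv catA.
Qed.

Lemma wcommute_winv u v : wcommute u v -> wcommute (winv u) v.
Proof.
rewrite /wcommute => huv; apply: (@quot_cancel_l u).
by rewrite catA quot_catV catA huv -catA quot_catV cats0.
Qed.

Lemma braid_conj_wpow a b j :
  a ++ b ++ a ≡ b ++ a ++ b -> (a ++ b) ++ wpow a j ≡ wpow b j ++ (a ++ b).
Proof.
move=> hab; elim: j => [|j IH]; first by rewrite cats0.
by rewrite !wpowS catA -(catA a b a) hab -catA IH catA.
Qed.

Lemma braid_related_eq r k a b :
  a ++ b ++ a ≡ b ++ a ++ b -> wpow a (r * k).+1 ≡ [::] ->
  wcommute (wpow a r) (wpow b r) -> a ≡ b.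
Proof.
move=> hab ha hr.
have hb : wpow b (r * k).+1 ≡ [::].
  by apply: (@quot_cancel_r (a ++ b)); rewrite -braid_conj_wpow // ha cats0.
have hcomm : wcommute a b.
  rewrite /wcommute (eq_winv_wpow ha) (eq_winv_wpow hb) !wpowM.
  do 2![apply: wcommute_winv; apply: wcommute_sym].
  by do 2![apply: wcommute_wpow; apply: wcommute_sym].
apply: (@quot_cancel_l a); apply: (@quot_cancel_l b).
by rewrite catA -hcomm -catA hab.
Qed.

End QuotientGroup.

Section ExponentSum.
Local Open Scope ring_scope.
Context (p : nat) {n : nat}.
Implicit Types u v w : word n.

Definition exp_sum w : 'Z_p := \sum_(x <- w) (if x.2 then 1 else -1).

Lemma exp_sum_nil : exp_sum [::] = 0.
Proof. exact: big_nil. Qed.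

Lemma exp_sum_cat u v : exp_sum (u ++ v) = exp_sum u + exp_sum v.
Proof. exact: big_cat. Qed.

Lemma exp_sum_winv w : exp_sum (winv w) = - exp_sum w.
Proof.
rewrite /exp_sum big_rev big_map -sumrN.
by apply: eq_bigr => -[i []] _ //=; rewrite opprK.
Qed.

Lemma exp_sum_sigma_wpow (i : 'I_n.-1) j : exp_sum (wpow [:: (i, true)] j) = j%:R.
Proof.
elim: j => [|j IH]; first exact: exp_sum_nil.
by rewrite wpowS exp_sum_cat IH /exp_sum big_seq1 mulrS.
Qed.

Lemma exp_sum_quot_eq m u v : (1 < p)%N -> quot_eq m p u v -> exp_sum u = exp_sum v.
Proof.
move=> p_gt1; elim=> {u v} [u v [u' v' hb|u' v' _ _|i _]|//|u v _ ->|
                             u v w _ -> _ ->|u u' v v' _ hu _ hv] //.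
- case: hb => [i [] | i j _ | i j _]; rewrite /exp_sum !big_cons big_nil //=.
    by rewrite addr0 subrr.
  by rewrite addr0 addNr.
- by rewrite /commw !exp_sum_cat !exp_sum_winv exp_sum_nil; ring.
- by rewrite -wpow_letter exp_sum_sigma_wpow Zp_natr_self // exp_sum_nil.
- by rewrite !exp_sum_cat hu hv.
Qed.

End ExponentSum.

Section CyclicQuotient.
Variables (n m k : nat) (i0 : 'I_n.-1).
Hypotheses (m_gt1 : (1 < m)%N) (k_gt0 : (0 < k)%N) (i0_eq0 : val i0 = 0%N).
Local Notation p := (m * k).+1.
Local Notation "u ≡ v" := (@quot_eq n m p u v) (at level 70).
Local Notation sigma1 := [:: (i0, true)].

Let p_gt1 : (1 < p)%N. Proof. by rewrite ltnS muln_gt0 (ltnW m_gt1) k_gt0. Qed.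

Lemma sigma_eq_sigma1 (i : 'I_n.-1) : [:: (i, true)] ≡ sigma1.
Proof.
case: i => j; elim: j => [|j IH] j_lt.
  by rewrite (_ : Ordinal j_lt = i0) //; apply: val_inj.
have j_lt' : (j < n.-1)%N by exact: ltnW.
rewrite -(IH j_lt'); symmetry; apply: (@braid_related_eq n m p m k).
- exact/quot_eq_rel/qr_braid/br_near.
- by rewrite (IH j_lt') wpow_letter; apply/quot_eq_rel/qr_pow.
- apply/wcommute_commw/quot_eq_rel/qr_comm; rewrite wpow_letter;
  exact: in_congr_sigma_exp.
Qed.

Lemma sigma_wpow_order (i : 'I_n.-1) : wpow [:: (i, true)] p ≡ [::].
Proof. by rewrite sigma_eq_sigma1 wpow_letter; apply/quot_eq_rel/qr_pow. Qed.

Lemma sigma1_wpow_mod j : wpow sigma1 j ≡ wpow sigma1 (j %% p).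
Proof.
by rewrite {1}(divn_eq j p) wpowD (mulnC (j %/ p)) wpowM sigma_wpow_order wpow_nil.
Qed.

Lemma quot_eq_sigma1_wpow w :
  exists2 j, w ≡ wpow sigma1 j & (j%:R = exp_sum p w)%R.
Proof.
elim: w => [|[i []] w [j hw hj]]; first by exists 0%N; rewrite ?exp_sum_nil.
  exists j.+1; first by rewrite -cat1s hw sigma_eq_sigma1.
  by rewrite -cat1s exp_sum_cat -hj /exp_sum big_seq1 mulrS.
exists (m * k + j)%N.
  rewrite -cat1s hw wpowD -[[:: (i, false)]]/(winv [:: (i, true)]).
  by rewrite (winv_eq_wpow (sigma_wpow_order i)) sigma_eq_sigma1.
rewrite -cat1s exp_sum_cat -hj /exp_sum big_seq1 natrD.
by congr (_ + _)%R; apply/eqP; rewrite -addr_eq0 -mulrSr Zp_natr_self.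
Qed.

Lemma word_normal_form w : w ≡ wpow sigma1 (exp_sum p w).
Proof.
have [j hw hj] := quot_eq_sigma1_wpow w.
by rewrite {1}hw sigma1_wpow_mod -hj val_Zp_nat.
Qed.

Lemma quot_eq_exp_sum u v : u ≡ v <-> exp_sum p u = exp_sum p v.
Proof.
split; first exact: exp_sum_quot_eq.
by move=> huv; rewrite (word_normal_form u) (word_normal_form v) huv.
Qed.

End CyclicQuotient.

Local Open Scope ring_scope.

Theorem proposition3p1 (n m k : nat) :
  (3 <= n)%N -> (2 <= m)%N -> (1 <= k)%N ->
  (exists s : seq (word n), forall w : word n,
      exists2 w', w' \in s & quot_eq m (m * k).+1 w w') /\
  (exists f : word n -> 'Z_((m * k).+1),
      (forall u v, f (u ++ v) = f u + f v) /\
      (forall z, exists w, f w = z) /\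
      (forall u v, quot_eq m (m * k).+1 u v <-> f u = f v)).
Proof.
move=> n_ge3 m_ge2 k_ge1.
have i0_lt : (0 < n.-1)%N by rewrite -subn1 subn_gt0 (ltnW n_ge3).
pose i0 := Ordinal i0_lt; pose sigma1 := [:: (i0, true)].
have i0_eq0 : val i0 = 0%N by [].
split.
  exists [seq wpow sigma1 z | z : 'Z_((m * k).+1)] => w.
  exists (wpow sigma1 (exp_sum (m * k).+1 w)); first exact: image_f.
  exact: (word_normal_form m_ge2 k_ge1 i0_eq0).
exists (exp_sum (m * k).+1); split; [exact: exp_sum_cat | split].
- by move=> z; exists (wpow sigma1 z); rewrite exp_sum_sigma_wpow natr_Zp.
- by move=> u v; apply: (quot_eq_exp_sum m_ge2 k_ge1 i0_eq0).
Qed.
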